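(* Let $a,b\in F$ with $v(a)\le\min\{0,v(b)\}$. Then for every integer $m<-v(3)$, $$\int_{t\in\mathfrak{p}^m\setminus\mathfrak{p}^{m+1}}\psi(at^3+bt)\,dt=0.$$
   Context: $F$ is a non-archimedean local field of characteristic $0$ and odd residue characteristic, with maximal ideal $\mathfrak{p}$ of its ring of integers $\mathcal{O}$, normalised valuation $v$, a fixed unramified additive character $\psi$ (trivial on $\mathcal{O}$, nontrivial on $\mathfrak{p}^{-1}$), and Haar measure $dt$ with $\mathrm{vol}(\mathcal{O})=1$. *)

From HB Require Import structures.
From mathcomp Require Import all_boot all_order all_algebra.
From mathcomp Require Import all_classical all_reals.
From mathcomp Require Import topology normedtype measure lebesgue_integral.
From mathcomp.real_closed Require Import complex.
Set Implicit Arguments. Unset Strict Implicit. Unset Printing Implicit Defensive.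
Import Order.TTheory GRing.Theory Num.Theory.
Local Open Scope ring_scope.
Local Open Scope classical_set_scope.

Section LocalField.
Variables (F : fieldType) (v : F -> int).

(* [v] is the normalised valuation on F^x; v 0 = +oo is encoded by always
   treating 0 separately. *)

Definition pow_ideal (n : int) : set F := [set x | x = 0 \/ n <= v x].

Definition ring_of_integers : set F := pow_ideal 0.

Definition annulus (m : int) : set F := pow_ideal m `\` pow_ideal (m + 1).

Definition normalised_discrete_valuation : Prop :=
  [/\ forall x y, x != 0 -> y != 0 -> v (x * y) = v x + v y,
      forall x y, x != 0 -> y != 0 -> x + y != 0 -> Order.min (v x) (v y) <= v (x + y)
    & exists pi, pi != 0 /\ v pi = 1].

Definition complete_wrt_v : Prop :=
  forall u : nat -> F,
    (forall N : int, exists n0, forall i j, (n0 <= i)%N -> (n0 <= j)%N ->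
        pow_ideal N (u i - u j)) ->
    exists l, forall N : int, exists n0, forall i, (n0 <= i)%N -> pow_ideal N (u i - l).

Definition finite_residue_field : Prop :=
  exists s : seq F, (forall y, y \in s -> ring_of_integers y) /\
    forall x, ring_of_integers x -> exists2 y, y \in s & pow_ideal 1 (x - y).

Definition residue_char (p : nat) : Prop :=
  prime p /\ pow_ideal 1 (p%:R : F).

Definition nonarch_local_field_char0_odd : Prop :=
  [/\ normalised_discrete_valuation, complete_wrt_v, finite_residue_field,
      [pchar F] =i pred0
    & exists p, residue_char p /\ p != 2%N].

(* balls { x | x - c in p^n }; they generate the Borel sigma-algebra *)
Definition balls : set (set F) :=
  [set B | exists c (n : int), B = [set x | pow_ideal n (x - c)]].

End LocalField.

Definition pF (F : fieldType) := F.
HB.instance Definition _ (F : fieldType) := Choice.on (pF F).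
HB.instance Definition _ (F : fieldType) := isPointed.Build (pF F) 0.

Definition Fmeas (F : fieldType) (v : F -> int) :=
  g_sigma_algebraType (@balls (pF F) v).

Definition normalised_haar (R : realType) (F : fieldType) (v : F -> int)
    (mu : {measure set (Fmeas v) -> \bar R}) : Prop :=
  (forall (x : F) (A : set (Fmeas v)), measurable A ->
      mu [set (x + y : F) | y in A] = mu A)
  /\ mu (ring_of_integers v : set (Fmeas v)) = 1%E.

Definition unramified_additive_character (R : realType) (F : fieldType)
    (v : F -> int) (psi : F -> R[i]) : Prop :=
  [/\ forall x y, psi (x + y) = psi x * psi y,
      forall x, `|psi x| = 1,
      forall x, ring_of_integers v x -> psi x = 1
    & exists x, pow_ideal v (-1) x /\ psi x != 1].

From HB Require Import structures.
From mathcomp Require Import all_boot all_order all_algebra.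
From mathcomp Require Import all_classical all_reals.
From mathcomp Require Import topology normedtype measure lebesgue_integral.
From mathcomp.real_closed Require Import complex.
From mathcomp Require Import numfun measurable_realfun zify ring.
Import Order.TTheory GRing.Theory Num.Theory.
Local Open Scope ring_scope.
Local Open Scope classical_set_scope.

(* Put f t = a t^3 + b t and choose n with v (3 a t^2) = - n - 1 on the shell
   v t = m; the hypothesis m < - v 3 gives n > m.  For x in p^n,
   f (t + x) = f t + f' t x modulo O, and v (f' t) = - n - 1 because
   v b >= v a > v (3 a t^2).  Hence psi o f is constant on cosets of p^(n+1), and the
   integral is vol(p^(n+1)) times the sum S of psi (f c) over representatives c
   of the shell modulo p^(n+1).  Translating the representatives by x in p^n
   gives S = sum_c psi (f c) psi (f' c x); averaging over x in p^n / p^(n+1)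
   makes every inner sum vanish, since x |-> psi (f' c x) is a nontrivial
   character there. *)

Set Implicit Arguments.
Unset Strict Implicit.

Section Valuation.
Variables (F : fieldType) (v : F -> int).
Hypothesis Hv : normalised_discrete_valuation v.
Local Notation P := (pow_ideal v).

Lemma valM x y : x != 0 -> y != 0 -> v (x * y) = v x + v y.
Proof. by case: Hv => vM _ _; apply: vM. Qed.

Lemma val1 : v 1 = 0.
Proof.
have v1D : v 1 = v 1 + v 1 by rewrite -valM ?mulr1 ?oner_neq0.
lia.
Qed.

Lemma valV x : x != 0 -> v x^-1 = - v x.
Proof. move=> x0; have := valM x0 (invr_neq0 x0); rewrite mulfV // val1; lia. Qed.

Lemma valN x : x != 0 -> v (- x) = v x.
Proof.
move=> x0; have N1_neq0 : (-1 : F) != 0 by rewrite oppr_eq0 oner_neq0.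
have := valM N1_neq0 N1_neq0; rewrite mulrNN mulr1 val1 => vN1.
rewrite -mulN1r valM //; lia.
Qed.

Lemma val_exprz x (z : int) : x != 0 -> v (x ^ z) = z * v x.
Proof.
move=> x0; have valX k : v (x ^+ k) = k%:Z * v x.
  elim: k => [|k IH]; first by rewrite expr0 val1 mul0r.
  by rewrite exprS valM ?expf_neq0 // IH -add1n PoszD mulrDl mul1r.
case: z => k; first by rewrite -exprnP valX.
by rewrite NegzE -exprnN valV ?expf_neq0 // valX mulNr.
Qed.

Lemma pow_ideal0 n : P n 0.
Proof. by left. Qed.

Lemma pow_idealP n x : x != 0 -> P n x <-> n <= v x.
Proof. by move=> x0; split; [case=> // /eqP; rewrite (negbTE x0) | right]. Qed.

Lemma pow_ideal_le n n' x : n <= n' -> P n' x -> P n x.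
Proof. by move=> le_nn' [->|h]; [left | right; apply: le_trans h]. Qed.

Lemma pow_idealD n x y : P n x -> P n y -> P n (x + y).
Proof.
move=> [->|hx]; first by rewrite add0r.
move=> [->|hy]; first by rewrite addr0; right.
have [->|x0] := eqVneq x 0; first by rewrite add0r; right.
have [->|y0] := eqVneq y 0; first by rewrite addr0; right.
have [xy0|xy0] := eqVneq (x + y) 0; first by left.
case: Hv => _ /(_ x y x0 y0 xy0) le_min_vD _.
by right; apply: le_trans le_min_vD; rewrite le_min hx hy.
Qed.

Lemma pow_idealN n x : P n x -> P n (- x).
Proof.
have [->|x0] := eqVneq x 0; first by rewrite oppr0.
by move=> /(pow_idealP _ x0) hx; right; rewrite valN.
Qed.

Lemma pow_idealB n x y : P n x -> P n y -> P n (x - y).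
Proof. by move=> hx /pow_idealN; apply: pow_idealD. Qed.

Lemma pow_idealM n n' x y : P n x -> P n' y -> P (n + n') (x * y).
Proof.
have [->|x0] := eqVneq x 0; first by rewrite mul0r; left.
have [->|y0] := eqVneq y 0; first by rewrite mulr0; left.
move=> /(pow_idealP _ x0) hx /(pow_idealP _ y0) hy.
by right; rewrite valM // lerD.
Qed.

Lemma pow_ideal_nat k : P 0 k%:R.
Proof.
elim: k => [|k IH]; first exact: pow_ideal0.
by rewrite mulrS; apply: pow_idealD => //; right; rewrite val1.
Qed.

Lemma val_nat_ge0 k : k%:R != 0 :> F -> 0 <= v k%:R.
Proof. by move=> k0; apply/(pow_idealP _ k0)/pow_ideal_nat. Qed.

Lemma valD_dominant x y : x != 0 -> P (v x + 1) y -> x + y != 0 /\ v (x + y) = v x.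
Proof.
move=> x0 hy.
have xy0 : x + y != 0.
  apply/eqP => /eqP; rewrite addr_eq0 => /eqP x_eq.
  by move: hy => /pow_idealN; rewrite -x_eq => /(pow_idealP _ x0); lia.
split => //.
have /(pow_idealP _ xy0) le_vx : P (v x) (x + y).
  by apply: pow_idealD; [right | apply: pow_ideal_le hy; lia].
suff : ~ v x + 1 <= v (x + y) by lia.
move=> /(pow_idealP _ xy0) hxy.
by have := pow_idealB hxy hy; rewrite addrK => /(pow_idealP _ x0); lia.
Qed.

Lemma annulus_val m t : annulus v m t -> t != 0 /\ v t = m.
Proof.
move=> [ht hnt]; have t0 : t != 0 by apply: contra_notN hnt => /eqP ->; left.
split => //; move/(pow_idealP _ t0): ht => ht.
suff : ~ m + 1 <= v t by lia.
by move=> h; apply: hnt; right.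
Qed.

Lemma annulus_translate m k z x : m < k ->
  annulus v m z -> P k x -> annulus v m (z + x).
Proof.
move=> lt_mk [hz hnz] hx; have {hx} hx : P (m + 1) x by apply: pow_ideal_le hx; lia.
split; first by apply: pow_idealD => //; apply: pow_ideal_le hx; lia.
by move=> hzx; apply: hnz; have := pow_idealB hzx hx; rewrite addrK.
Qed.

Lemma annulus_saturated m k c x : m < k ->
  annulus v m c -> P k (x - c) -> annulus v m x.
Proof. by move=> lt_mk hc /(annulus_translate lt_mk hc); rewrite addrC subrK. Qed.

Definition coset_reps (Q : set F) (n : int) (L : seq F) :=
  [/\ uniq L, forall l, l \in L -> Q l,
      forall x y, x \in L -> y \in L -> P n (x - y) -> x = y
    & forall x, Q x -> exists2 l, l \in L & P n (x - l)].

Hypothesis Hres : finite_residue_field v.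

Lemma pow_ideal_finite_cover k (n : nat) : exists L : seq F,
  (forall l, l \in L -> P k l) /\
  forall x, P k x -> exists2 l, l \in L & P (k + n%:Z) (x - l).
Proof.
have [pi [pi0 vpi]] : exists pi, pi != 0 /\ v pi = 1 by case: Hv.
have piX z : P z (pi ^ z) by right; rewrite val_exprz // vpi mulr1.
have piXN z : pi ^ z * pi ^ (- z) = 1 by rewrite -invr_expz mulfV // expfz_neq0.
case: Hres => S [SO Scover].
elim: n => [|n [L [LP Lcover]]].
  exists [:: 0]; split=> [l|x hx]; first by rewrite inE => /eqP ->; left.
  by exists 0; rewrite ?inE // addr0 subr0.
pose k' := k + n%:Z.
exists [seq l + pi ^ k' * s | l <- L, s <- S]; split.
  move=> _ /allpairsP [[l s] /= [lL sS ->]].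
  apply: pow_idealD; first exact: LP.
  by apply: (pow_ideal_le _ (pow_idealM (piX k') (SO s sS))); lia.
move=> x /Lcover [l lL hxl].
have /Scover [s sS hs] : ring_of_integers v ((x - l) * pi ^ (- k')).
  by rewrite /ring_of_integers -(subrr k'); apply: pow_idealM.
exists (l + pi ^ k' * s); first by apply/allpairsP; exists (l, s).
have -> : x - (l + pi ^ k' * s) = pi ^ k' * ((x - l) * pi ^ (- k') - s).
  by rewrite mulrBr mulrCA piXN mulr1; ring.
have -> : k + n.+1%:Z = k' + 1 by rewrite /k'; lia.
exact: pow_idealM.
Qed.

Lemma exists_separated_subseq n (L : seq F) : exists L',
  [/\ {subset L' <= L}, uniq L',
      forall x y, x \in L' -> y \in L' -> P n (x - y) -> x = y
    & forall x, x \in L -> exists2 y, y \in L' & P n (x - y)].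
Proof.
elim: L => [|x L [L' [subL' uL' sepL' coverL']]].
  by exists [::]; split => // x; rewrite in_nil.
have [[y yL' hxy]|new_x] := pselect (exists2 y, y \in L' & P n (x - y)).
  exists L'; split => //; first by move=> z /subL'; rewrite inE => ->; rewrite orbT.
  by move=> z; rewrite inE => /orP[/eqP ->|/coverL' //]; exists y.
exists (x :: L'); split.
- by move=> z; rewrite !inE => /orP[->|/subL' ->]; rewrite ?orbT.
- rewrite /= uL' andbT; apply: contra_notN new_x => xL'.
  by exists x; rewrite // subrr; left.
- move=> y z; rewrite !inE => /orP[/eqP ->|yL'] /orP[/eqP ->|zL'] //.
  + by move=> hxz; case: new_x; exists z.
  + by move=> /pow_idealN; rewrite opprB => hxy; case: new_x; exists y.
  + exact: sepL'.
- move=> z; rewrite inE => /orP[/eqP ->|/coverL' [y yL' hzy]].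
    by exists x; rewrite ?inE ?eqxx // subrr; left.
  by exists y; rewrite // inE yL' orbT.
Qed.

Lemma exists_coset_reps_pow_ideal k n : k <= n -> exists L, coset_reps (P k) n L.
Proof.
move=> le_kn; have [L [LP Lcover]] := pow_ideal_finite_cover k `|n - k|%N.
have [L' [subL' uL' sepL' coverL']] := exists_separated_subseq n L.
exists L'; split => // [l /subL' /LP //|x /Lcover [l /coverL' [y yL' hly] hxl]].
exists y => //; have -> : x - y = (x - l) + (l - y) by ring.
by apply: pow_idealD => //; have -> : n = k + `|n - k|%N%:Z by lia.
Qed.

Lemma coset_reps_sub (Q Q' : set F) n L : coset_reps Q n L -> Q' `<=` Q ->
  (forall c x, Q' c -> P n (x - c) -> Q' x) ->
  coset_reps Q' n [seq l <- L | `[< Q' l >]].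
Proof.
move=> [uL LQ sepL coverL] subQ' satQ'; split.
- exact: filter_uniq.
- by move=> l; rewrite mem_filter => /andP [/asboolP].
- by move=> x y; rewrite !mem_filter => /andP [_ xL] /andP [_ yL]; apply: sepL.
- move=> x Q'x; have [l lL hxl] := coverL x (subQ' x Q'x).
  exists l => //; rewrite mem_filter lL andbT; apply/asboolP.
  by apply: satQ' Q'x _; rewrite -opprB; apply: pow_idealN.
Qed.

Lemma exists_coset_reps_annulus m n : m < n -> exists C, coset_reps (annulus v m) n C.
Proof.
move=> lt_mn; have [L HL] := @exists_coset_reps_pow_ideal m n (ltW lt_mn).
exists [seq l <- L | `[< annulus v m l >]].
by apply: coset_reps_sub HL _ _ => [x [] | c x]; last exact: annulus_saturated.
Qed.

Lemma coset_reps_sum_translate Q n L y (V : nmodType) (phi : F -> V) :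
  coset_reps Q n L -> (forall z, Q z -> Q (z + y)) ->
  (forall z z', Q z -> Q z' -> P n (z - z') -> phi z = phi z') ->
  \sum_(l <- L) phi (l + y) = \sum_(l <- L) phi l.
Proof.
move=> [uL LQ sepL coverL] Qy phiE.
have [rho rhoP] : exists rho : F -> F,
    forall z, Q z -> rho z \in L /\ P n (z - rho z).
  pose near z l := `[< P n (z - l) >].
  exists (fun z => nth 0 L (find (near z) L)) => z /coverL hz.
  have hasz : has (near z) L.
    by case: hz => l lL hl; apply/hasP; exists l => //; apply/asboolP.
  by split; [rewrite mem_nth // -has_find | apply/asboolP/(nth_find 0 hasz)].
pose g l := rho (l + y).
have gP l : l \in L -> g l \in L /\ P n (l + y - g l) by move=> /LQ /Qy /rhoP.
transitivity (\sum_(l <- L) phi (g l)).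
  apply: eq_big_seq => l lL; have [glL hgl] := gP l lL.
  by apply: phiE => //; [apply/Qy/LQ | apply: LQ].
have g_inj : {in L &, injective g}.
  move=> l1 l2 l1L l2L eq_g; apply: sepL => //.
  have [_ h1] := gP l1 l1L; have [_ h2] := gP l2 l2L.
  have -> : l1 - l2 = (l1 + y - g l1) - (l2 + y - g l2) by rewrite eq_g; ring.
  exact: pow_idealB.
have uniq_gL : uniq (map g L) by rewrite map_inj_in_uniq.
have sub_gL : {subset map g L <= L} by move=> _ /mapP [l /gP [] ? _ ->].
have [_ eq_gL] := uniq_min_size uniq_gL sub_gL (eq_leq (esym (size_map g L))).
by rewrite -(big_map g xpredT phi); apply/perm_big/uniq_perm.
Qed.

Section Character.
Variables (R : realType) (psi : F -> R[i]).
Hypothesis Hpsi : unramified_additive_character v psi.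

Lemma psiD x y : psi (x + y) = psi x * psi y.
Proof. by case: Hpsi. Qed.

Lemma psi_eq1 x : P 0 x -> psi x = 1.
Proof. by case: Hpsi => _ _ psiO _; apply: psiO. Qed.

Lemma psi_eq x y : P 0 (x - y) -> psi x = psi y.
Proof. by move=> /psi_eq1 psi1; rewrite -(subrK y x) psiD psi1 mul1r. Qed.

Lemma sum_psi_scale_eq0 k X c : coset_reps (P k) (k + 1) X ->
  c != 0 -> v c = - k - 1 -> \sum_(x <- X) psi (c * x) = 0.
Proof.
move=> HX c0 vc; case: Hpsi => _ _ _ [z [hz psiz]].
have Pc : P (- k - 1) c by right; rewrite vc.
have PcV : P (k + 1) c^-1 by right; rewrite valV // vc; lia.
have zc : P k (z / c) by apply: (pow_ideal_le _ (pow_idealM hz PcV)); lia.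
set S := \sum_(x <- X) psi (c * x).
have : psi z * S = S.
  rewrite -[RHS](coset_reps_sum_translate (y := z / c) (phi := fun x => psi (c * x)) HX).
  - rewrite big_distrr /=; apply: eq_bigr => x _.
    by rewrite mulrDr mulrCA mulfV // mulr1 psiD mulrC.
  - by move=> x hx; apply: pow_idealD.
  - move=> x x' _ _ hxx'; apply: psi_eq; rewrite -mulrBr.
    by apply: (pow_ideal_le _ (pow_idealM Pc hxx')); lia.
move/eqP; rewrite -subr_eq0 -{2}[S]mul1r -mulrBl mulf_eq0 subr_eq0.
by rewrite (negbTE psiz) => /eqP.
Qed.

Section NonStationaryPhase.
Variables (Q : set F) (n : int) (f f' : F -> F).
Hypothesis Q_translate : forall z x, Q z -> P n x -> Q (z + x).
Hypothesis f_linearization :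
  forall z x, Q z -> P n x -> P 0 (f (z + x) - f z - f' z * x).
Hypothesis val_f' : forall z, Q z -> f' z != 0 /\ v (f' z) = - n - 1.

Lemma psi_comp_translate z x : Q z -> P n x ->
  psi (f (z + x)) = psi (f z) * psi (f' z * x).
Proof.
move=> Qz hx; rewrite -psiD; apply: psi_eq.
by rewrite opprD addrA; apply: f_linearization.
Qed.

Lemma psi_comp_coset_const z z' : Q z -> Q z' -> P (n + 1) (z - z') ->
  psi (f z) = psi (f z').
Proof.
move=> _ Qz' hzz'; have [_ vf'] := val_f' Qz'.
have Pf' : P (- n - 1) (f' z') by right; rewrite vf'.
rewrite -(subrK z' z) addrC psi_comp_translate //; last first.
  by apply: pow_ideal_le hzz'; lia.
rewrite [psi (f' _ * _)]psi_eq1 ?mulr1 //.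
by apply: (pow_ideal_le _ (pow_idealM Pf' hzz')); lia.
Qed.

Lemma sum_psi_comp_eq0 C : coset_reps Q (n + 1) C -> \sum_(c <- C) psi (f c) = 0.
Proof.
move=> HC; have CQ : forall c, c \in C -> Q c by case: HC.
have [X HX] := @exists_coset_reps_pow_ideal n (n + 1) (lerDl n 1).
set S := \sum_(c <- C) psi (f c).
have S_translate x : x \in X -> S = \sum_(c <- C) psi (f c) * psi (f' c * x).
  move=> xX; have hx : P n x by case: HX => _ + _ _; apply.
  rewrite /S -(coset_reps_sum_translate (y := x) (phi := fun c => psi (f c)) HC).
  - by apply: eq_big_seq => c /CQ Qc; apply: psi_comp_translate.
  - by move=> z Qz; apply: Q_translate.
  - exact: psi_comp_coset_const.
have : S *+ size X = 0.
  have -> : S *+ size X = \sum_(x <- X) S.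
    by rewrite big_const_seq count_predT -Monoid.iteropE.
  rewrite (eq_big_seq _ S_translate) exchange_big /=.
  apply: big1_seq => c /andP [_ /CQ /val_f' [f'0 vf']].
  by rewrite -big_distrr /= (sum_psi_scale_eq0 HX f'0 vf') mulr0.
move/eqP; rewrite mulrn_eq0 => /orP [|/eqP //].
by case: HX => _ _ _ /(_ 0 (pow_ideal0 n)) [l]; case: (X).
Qed.

End NonStationaryPhase.
End Character.

Section Cubic.
Variables (a b : F) (m n : int).
Hypothesis three0 : 3%:R != 0 :> F.
Hypothesis n_def : v 3%:R + v a + m + m = - n - 1.

Lemma shell_lt_index : v a <= 0 -> m < - v 3%:R -> m < n.
Proof. have := val_nat_ge0 three0; lia. Qed.

Lemma cubic_linearization z x : v a <= 0 -> m < - v 3%:R ->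
  annulus v m z -> P n x ->
  P 0 (a * (z + x) ^+ 3 + b * (z + x) - (a * z ^+ 3 + b * z)
       - (3%:R * a * z ^+ 2 + b) * x).
Proof.
move=> va_le0 Hm [hz _] hx; have v3_ge0 := val_nat_ge0 three0.
have P3 : P (v 3%:R) 3%:R by right.
have Pa : P (v a) a by right.
have -> : a * (z + x) ^+ 3 + b * (z + x) - (a * z ^+ 3 + b * z)
    - (3%:R * a * z ^+ 2 + b) * x = 3%:R * a * z * (x * x) + a * (x * (x * x)).
  by ring.
apply: pow_idealD.
- have := pow_idealM (pow_idealM (pow_idealM P3 Pa) hz) (pow_idealM hx hx).
  by apply: pow_ideal_le; lia.
- have := pow_idealM Pa (pow_idealM hx (pow_idealM hx hx)).
  by apply: pow_ideal_le; lia.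
Qed.

Lemma val_cubic_derivative z : a != 0 -> (b != 0 -> v a <= v b) -> m < - v 3%:R ->
  annulus v m z ->
  3%:R * a * z ^+ 2 + b != 0 /\ v (3%:R * a * z ^+ 2 + b) = - n - 1.
Proof.
move=> a0 vab Hm /annulus_val [z0 vz]; have v3_ge0 := val_nat_ge0 three0.
have lead0 : 3%:R * a * z ^+ 2 != 0 by rewrite !mulf_neq0 ?expf_neq0.
have vlead : v (3%:R * a * z ^+ 2) = - n - 1.
  by rewrite valM ?mulf_neq0 ?expf_neq0 // valM // expr2 valM // vz -n_def; lia.
rewrite -vlead; apply: valD_dominant => //.
have [->|b0] := eqVneq b 0; [exact: pow_ideal0 | right].
by have := vab b0; rewrite vlead; lia.
Qed.

End Cubic.
End Valuation.

Section HaarMeasure.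
Variables (R : realType) (F : fieldType) (v : F -> int).
Hypothesis Hv : normalised_discrete_valuation v.
Variable mu : {measure set (Fmeas v) -> \bar R}.
Hypothesis Hmu : normalised_haar mu.
Local Notation P := (pow_ideal v).
Local Notation T := (Fmeas v).

Definition pcoset n c : set T := [set x | P n (x - c)].

Lemma measurable_pcoset n c : measurable (pcoset n c).
Proof. by apply: sub_sigma_algebra; exists c, n. Qed.

Lemma measurable_annulus m : measurable (annulus v m : set T).
Proof.
have -> : (annulus v m : set T) = pcoset m 0 `\` pcoset (m + 1) 0.
  by apply/seteqP; split => x; rewrite /pcoset /annulus /= !subr0.
by apply: measurableD; apply: measurable_pcoset.
Qed.

Lemma measure_pcoset n c : mu (pcoset n c) = mu (pcoset n 0).
Proof.
have -> : pcoset n c = [set (c + y : F) | y in pcoset n 0].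
  apply/seteqP; split => x /=.
    by move=> hx; exists (x - c); [rewrite /pcoset /= subr0 | rewrite addrC subrK].
  by move=> [y hy <-]; move: hy; rewrite /pcoset /= subr0 addrAC subrr add0r.
by case: Hmu => + _; apply; apply: measurable_pcoset.
Qed.

Lemma measure_pcoset_fin n : 0 <= n -> mu (pcoset n 0) \is a fin_num.
Proof.
move=> n_ge0; rewrite ge0_fin_numE ?measure_ge0 //.
apply: (@le_lt_trans _ _ 1%E); last by rewrite ltry.
have O_eq : (ring_of_integers v : set T) = pcoset 0 0.
  by apply/seteqP; split => x; rewrite /pcoset /= subr0.
case: Hmu => _ <-; rewrite O_eq; apply: le_measure; rewrite ?inE;
  try exact: measurable_pcoset.
by move=> x; rewrite /pcoset /= !subr0; apply: pow_ideal_le.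
Qed.

Lemma integrable_indic_pcoset A n c : measurable A -> 0 <= n ->
  mu.-integrable A (fun t => (\1_(pcoset n c) t)%:E).
Proof.
move=> mA n_ge0; apply/integrableP; split.
  by apply/measurable_EFinP/measurable_indic; exact: measurable_pcoset.
under eq_integral do rewrite gee0_abs ?lee_fin //.
rewrite integral_indic //; last exact: measurable_pcoset.
apply: (@le_lt_trans _ _ (mu (pcoset n c))).
  apply: le_measure; rewrite ?inE; last by move=> x [].
    by apply: measurableI => //; exact: measurable_pcoset.
  exact: measurable_pcoset.
by rewrite measure_pcoset -ge0_fin_numE ?measure_ge0 ?measure_pcoset_fin.
Qed.

Lemma integral_coset_const (A : set T) n C (h : F -> R) :
  measurable A -> 0 <= n -> coset_reps v A n C ->
  (forall c x, A c -> P n (x - c) -> A x) ->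
  (forall z z', A z -> A z' -> P n (z - z') -> h z = h z') ->
  (\int[mu]_(t in A) (h t)%:E = ((\sum_(c <- C) h c) * fine (mu (pcoset n 0)))%:E)%E.
Proof.
move=> mA n_ge0 [uC CA sepC coverC] satA h_const.
transitivity (\int[mu]_(t in A) \sum_(c <- C) ((h c)%:E * (\1_(pcoset n c) t)%:E))%E.
  apply: eq_integral => t /set_mem At.
  under eq_bigr do rewrite -EFinM.
  rewrite sumEFin; congr (_%:E).
  have [c0 c0C htc0] := coverC t At.
  rewrite (bigD1_seq c0) //= big1_seq ?addr0.
    by rewrite indicE mem_set // mulr1; apply: h_const => //; apply: CA.
  move=> c /andP [cc0 cC]; rewrite indicE memNset ?mulr0 // => htc.
  move/eqP: cc0; apply; apply: sepC => //.
  have -> : c - c0 = (t - c0) - (t - c) by ring.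
  exact: pow_idealB.
rewrite integral_sum //; last first.
  by move=> c; apply: integrableZl => //; apply: integrable_indic_pcoset.
rewrite big_distrl /= -sumEFin; apply: eq_big_seq => c cC.
rewrite integralZl //; last exact: integrable_indic_pcoset.
rewrite integral_indic //; last exact: measurable_pcoset.
rewrite setIidl; last by move=> x; apply: satA; apply: CA.
by rewrite measure_pcoset EFinM fineK ?measure_pcoset_fin.
Qed.

End HaarMeasure.

Unset Implicit Arguments.

Theorem lemma7p6 (R : realType) (F : fieldType) (v : F -> int)
    (HF : nonarch_local_field_char0_odd v)
    (mu : {measure set (Fmeas v) -> \bar R}) (Hmu : normalised_haar mu)
    (psi : F -> R[i]) (Hpsi : unramified_additive_character v psi)
    (a b : F)
    (Hab : a != 0 /\ v a <= 0 /\ (b != 0 -> v a <= v b))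
    (m : int) (Hm : m < - v 3%:R) :
  (\int[mu]_(t in (annulus v m : set (Fmeas v)))
      (complex.Re (psi (a * t ^+ 3 + b * t)))%:E = 0)%E /\
  (\int[mu]_(t in (annulus v m : set (Fmeas v)))
      (complex.Im (psi (a * t ^+ 3 + b * t)))%:E = 0)%E.
Proof.
case: HF => Hv _ Hres /(pcharf0P F) char0 _; case: Hab => a0 [va_le0 vab].
have three0 : 3%:R != 0 :> F by rewrite char0.
pose n := - (v 3%:R + v a + m + m) - 1.
have n_def : v 3%:R + v a + m + m = - n - 1 by rewrite /n; lia.
have lt_mn := shell_lt_index Hv three0 n_def va_le0 Hm.
have lt_mn1 : m < n + 1 by lia.
have [C HC] := exists_coset_reps_annulus Hv Hres lt_mn1.
have lin := cubic_linearization Hv b three0 n_def va_le0 Hm.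
have val_f' := val_cubic_derivative Hv three0 n_def a0 vab Hm.
have S0 := sum_psi_comp_eq0 Hv Hres Hpsi
  (fun z x => annulus_translate Hv lt_mn) lin val_f' HC.
have n1_ge0 : 0 <= n + 1 by have := val_nat_ge0 Hv three0; lia.
have psif_const := psi_comp_coset_const Hv Hpsi lin val_f'.
split; rewrite (integral_coset_const Hv Hmu (measurable_annulus m) n1_ge0 HC
                  (fun c x => annulus_saturated Hv lt_mn1)).
- by rewrite -raddf_sum S0 raddf0 mul0r.
- by move=> z z' hz hz' hzz' /=; rewrite (psif_const z z').
- by rewrite -raddf_sum S0 raddf0 mul0r.
- by move=> z z' hz hz' hzz' /=; rewrite (psif_const z z').
Qed.
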